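(* Let $\mathbb{K}$ be an algebraically closed field of characteristic zero, $X$ an irreducible affine variety over $\mathbb{K}$, and $U\subseteq X$ a principal open subset (i.e., $U=\{x\in X\mid h(x)\neq 0\}$ for some $h\in\mathbb{K}[X]$). Then for any $\mathbb{G}_a$-subgroup $H$ of $\mathrm{Aut}(U)$ there exists a $\mathbb{G}_a$-subgroup $H'$ of $\mathrm{Aut}(X)$ such that $Hx = H'x$ for every $x\in U$.
   Context: $\mathbb{G}_a=(\mathbb{K},+)$; a $\mathbb{G}_a$-subgroup of the automorphism group of a variety is the image of an effective regular $\mathbb{G}_a$-action on it. *)

From HB Require Import structures.
From mathcomp Require Import all_boot all_order all_algebra.
From mathcomp Require Import mpoly.
Set Implicit Arguments. Unset Strict Implicit. Unset Printing Implicit Defensive.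
Import GRing.Theory.
Local Open Scope ring_scope.

Section Defs.
Variables (K : fieldType) (n : nat).

Definition point := 'I_n -> K.

Definition zclosed (Z : point -> Prop) : Prop :=
  exists S : {mpoly K[n]} -> Prop,
    forall x, Z x <-> (forall p, S p -> p.@[x] = 0).

Definition irreducible (X : point -> Prop) : Prop :=
  (exists x, X x) /\
  forall Z1 Z2, zclosed Z1 -> zclosed Z2 ->
    (forall x, X x -> Z1 x \/ Z2 x) ->
    (forall x, X x -> Z1 x) \/ (forall x, X x -> Z2 x).

Definition principal_open (X : point -> Prop) (h : {mpoly K[n]}) : point -> Prop :=
  fun x => X x /\ h.@[x] != 0.

(* A regular map A^1 x X_h -> K^n: each coordinate is a regular function on
   A^1 x X_h, i.e. an element of K[X]_h[t], written P_i(t, x) / h(x)^k with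
   P_i in K[x_1..x_n][t]. *)
Definition ga_map (h : {mpoly K[n]}) (P : 'I_n -> {poly {mpoly K[n]}}) (k : nat)
  (t : K) (x : point) : point :=
  fun i => (map_poly (meval x) (P i)).[t] / (h.@[x]) ^+ k.

(* (P, k) defines an effective regular G_a-action on the principal open set
   U = X_h (for h = 1 this is an effective regular G_a-action on X). *)
Definition is_Ga_action (X : point -> Prop) (h : {mpoly K[n]})
  (P : 'I_n -> {poly {mpoly K[n]}}) (k : nat) : Prop :=
  let U := principal_open X h in
  let a := ga_map h P k in
  [/\ forall t x, U x -> U (a t x),
      forall x, U x -> a 0 x = x,
      forall s t x, U x -> a (s + t) x = a s (a t x)
    & forall t, t != 0 -> exists x, U x /\ a t x <> x].

Definition ga_orbit (h : {mpoly K[n]}) (P : 'I_n -> {poly {mpoly K[n]}}) (k : nat)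
  (x : point) : point -> Prop :=
  fun y => exists t : K, y = ga_map h P k t x.

End Defs.

(* Rescale time along the orbits: b_t(x) := a_{h(x)^k t}(x).  Write
   P_i(t, x) = P_i(0, x) + t D_i(t, x); since a_0 = id, P_i(0, x) = x_i h(x)^k,
   so b_t(x)_i = x_i + t D_i(h(x)^k t, x) is a polynomial in (t, x), defined on
   all of X.  On each orbit of a in U the polynomial h never vanishes; over an
   algebraically closed field it is then constant along the orbit, so b is an
   action on U with the same orbits as a.  U is dense in the irreducible X, so
   the polynomial identities expressing that b preserves X and is an action
   extend from U to X.  Effectiveness: if b_t fixed a point x0 of U that a_1
   moves, then a would have a nonzero period at x0; in characteristic zero the
   polynomial map s |-> a_s(x0) would then be constant. *)

From HB Require Import structures.
From mathcomp Require Import all_boot all_order all_algebra.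
From mathcomp Require Import mpoly ring.
From Stdlib Require Import FunctionalExtensionality.
Set Implicit Arguments. Unset Strict Implicit. Unset Printing Implicit Defensive.
Import GRing.Theory.
Local Open Scope ring_scope.

Lemma horner_drop1 (R : comNzRingType) (p : {poly R}) y :
  p.[y] = p`_0 + (drop_poly 1 p).[y] * y.
Proof.
rewrite -{1}(poly_take_drop 1 p) hornerD hornerM hornerXn expr1; congr (_ + _).
have /size1_polyC -> : (size (take_poly 1 p) <= 1)%N by apply: size_take_poly.
by rewrite hornerC coef_take_poly.
Qed.

Lemma pchar0_natr_inj (R : idomainType) :
  [pchar R] =i pred0 -> injective (fun m : nat => m%:R : R).
Proof.
move=> /(pcharf0P _) pchar0R.
suff le_inj a b : (a <= b)%N -> a%:R = b%:R :> R -> a = b.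
  move=> a b eq_ab; case: (leqP a b) => [le_ab | /ltnW le_ba].
    exact: le_inj.
  exact: esym (le_inj _ _ le_ba (esym eq_ab)).
move=> le_ab eq_ab; apply/eqP; rewrite eqn_leq le_ab /= -subn_eq0 -pchar0R.
by rewrite natrB // eq_ab subrr.
Qed.

Lemma pchar0_poly_eq0 (F : fieldType) (p : {poly F}) c :
  [pchar F] =i pred0 -> c != 0 -> (forall m : nat, p.[m%:R * c] = 0) -> p = 0.
Proof.
move=> pchar0F c_neq0 p_mc.
apply: (@roots_geq_poly_eq0 _ _ (mkseq (fun m : nat => m%:R * c) (size p))).
- by apply/allP => _ /mapP [m _ ->]; apply/rootP.
- rewrite map_inj_uniq ?iota_uniq // => a b /(mulIf c_neq0).
  exact: pchar0_natr_inj.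
- by rewrite size_mkseq.
Qed.

Lemma closed_nonvanishing_polyC (F : closedFieldType) (p : {poly F}) :
  (forall t, p.[t] != 0) -> p = (p`_0)%:P.
Proof.
move=> p_neq0; apply: size1_polyC.
case: (eqVneq (size p) 1) => [-> //|/closed_rootP [t /rootP pt0]].
by have := p_neq0 t; rewrite pt0 eqxx.
Qed.

Lemma meval_horner_curve (R : comNzRingType) n (r : {mpoly R[n]})
    (c : 'I_n -> {poly R}) t :
  r.@[fun i => (c i).[t]] = (mmap polyC c r).[t].
Proof.
rewrite mevalE /mmap -[_.[t]]/(horner_eval t _) rmorph_sum /=.
apply: eq_bigr => m _; rewrite rmorphM rmorph_prod /= /horner_eval hornerC.
by congr (_ * _); apply: eq_bigr => i _; rewrite horner_exp.
Qed.

Lemma meval_curve_const (F : closedFieldType) n (r : {mpoly F[n]})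
    (c : 'I_n -> {poly F}) s t :
  (forall u, r.@[fun i => (c i).[u]] != 0) ->
  r.@[fun i => (c i).[s]] = r.@[fun i => (c i).[t]].
Proof.
move=> r_neq0; rewrite !meval_horner_curve.
rewrite (closed_nonvanishing_polyC (p := mmap polyC c r)) ?hornerC // => u.
by rewrite -meval_horner_curve.
Qed.

Lemma meval_hornerC (R : comNzRingType) n (p : {poly {mpoly R[n]}}) x t :
  (p.[t%:MP]).@[x] = (map_poly (meval x) p).[t].
Proof. by rewrite -horner_map /= mevalC. Qed.

Section PolynomialGaMap.
Variables (K : fieldType) (n : nat) (Q : 'I_n -> {poly {mpoly K[n]}}).
Local Notation b := (ga_map 1 Q 0%N).

Lemma ga_map1E t x i : b t x i = ((Q i).[t%:MP]).@[x].
Proof. by rewrite /ga_map expr0 divr1 meval_hornerC. Qed.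

Lemma meval_ga_map1 t x (r : {mpoly K[n]}) :
  r.@[b t x] = (r \mPo [tuple (Q i).[t%:MP] | i < n]).@[x].
Proof.
by rewrite comp_mpoly_meval; apply: meval_eq => i; rewrite tnth_mktuple ga_map1E.
Qed.

End PolynomialGaMap.

Section PrincipalOpenDense.
Variables (K : fieldType) (n : nat) (X : point K n -> Prop) (h : {mpoly K[n]}).
Hypotheses (X_irr : irreducible X) (U_neq0 : exists x, principal_open X h x).

Lemma zclosed_meval_eq (p q : {mpoly K[n]}) : zclosed (fun x => p.@[x] = q.@[x]).
Proof.
exists (eq^~ (p - q)) => x.
split=> [pq _ -> | /(_ _ erefl)]; rewrite mevalB ?pq ?subrr //.
by move/eqP; rewrite subr_eq0 => /eqP.
Qed.

Lemma principal_open_dense (p q : {mpoly K[n]}) :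
  (forall x, principal_open X h x -> p.@[x] = q.@[x]) ->
  forall x, X x -> p.@[x] = q.@[x].
Proof.
move=> pq_U; have [x0 [Xx0 hx0]] := U_neq0.
case: (X_irr.2 _ _ (zclosed_meval_eq p q) (zclosed_meval_eq h 0))
  => [x Xx|pq_X|h_X].
- rewrite meval0.
  by case: (eqVneq h.@[x] 0) => [|hx]; [right | left; apply: pq_U].
- exact: pq_X.
- by move: hx0; rewrite h_X // meval0 eqxx.
Qed.

Variable Q : 'I_n -> {poly {mpoly K[n]}}.
Local Notation b := (ga_map 1 Q 0%N).

Lemma ga_map1_stable_dense : zclosed X ->
  (forall t x, principal_open X h x -> X (b t x)) -> forall t x, X x -> X (b t x).
Proof.
move=> [S defX] b_U t x Xx; apply/defX => p Sp.
rewrite meval_ga_map1 -(meval0 x); apply: principal_open_dense Xx => z Uz.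
by rewrite meval0 -meval_ga_map1; apply: (proj1 (defX _)) Sp; apply: b_U.
Qed.

Lemma ga_map1D_dense :
  (forall s t x, principal_open X h x -> b (s + t) x = b s (b t x)) ->
  forall s t x, X x -> b (s + t) x = b s (b t x).
Proof.
move=> bD_U s t x Xx; apply: functional_extensionality => i.
rewrite [LHS]ga_map1E [RHS]ga_map1E meval_ga_map1.
apply: principal_open_dense Xx => z Uz.
by rewrite -meval_ga_map1 -ga_map1E -ga_map1E bD_U.
Qed.

End PrincipalOpenDense.

Section Replica.
Variables (K : closedFieldType) (n : nat) (X : point K n -> Prop).
Variables (h : {mpoly K[n]}) (P : 'I_n -> {poly {mpoly K[n]}}) (k : nat).
Hypothesis act : is_Ga_action X h P k.
Local Notation U := (principal_open X h).
Local Notation a := (ga_map h P k).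

Lemma act_stable t x : U x -> U (a t x).
Proof. by case: act => + _ _ _; apply. Qed.

Lemma act0 x : U x -> a 0 x = x.
Proof. by case: act => _ + _ _; apply. Qed.

Lemma actD s t x : U x -> a (s + t) x = a s (a t x).
Proof. by case: act => _ _ + _; apply. Qed.

Lemma hpow_neq0 x : U x -> h.@[x] ^+ k != 0.
Proof. by case=> _ hx; rewrite expf_neq0. Qed.

Lemma ga_mapE t x i :
  a t x i =
    (((P i)`_0).@[x] + ((drop_poly 1 (P i)).[t%:MP]).@[x] * t) / h.@[x] ^+ k.
Proof. by rewrite /ga_map -meval_hornerC horner_drop1 mevalD mevalM mevalC. Qed.

Lemma meval_coef0 x i : U x -> ((P i)`_0).@[x] = x i * h.@[x] ^+ k.
Proof.
move=> Ux; have := congr1 (fun y => y i) (act0 Ux).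
by rewrite ga_mapE mulr0 addr0 => <-; rewrite divfK ?hpow_neq0.
Qed.

Lemma meval_h_ga_map t x : U x -> h.@[a t x] = h.@[x].
Proof.
move=> Ux; pose c i := map_poly (meval x) (P i) * (h.@[x] ^- k)%:P.
have ac s : a s x = fun i => (c i).[s].
  by apply: functional_extensionality => i; rewrite hornerM hornerC.
rewrite -{2}(act0 Ux) !ac; apply: meval_curve_const => s.
by rewrite -ac; case: (act_stable s Ux).
Qed.

Lemma ga_map_period_fixed c x : [pchar K] =i pred0 -> U x ->
  c != 0 -> a c x = x -> forall t, a t x = x.
Proof.
move=> pchar0 Ux c_neq0 acx t.
have amc (m : nat) : a (m%:R * c) x = x.
  elim: m => [|m IHm]; first by rewrite mul0r act0.
  by rewrite -nat1r mulrDl mul1r actD // IHm.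
apply: functional_extensionality => i.
pose g := map_poly (meval x) (P i) - (x i * h.@[x] ^+ k)%:P.
have g0 : g = 0.
  apply: (pchar0_poly_eq0 pchar0 c_neq0) => m.
  have := congr1 (fun y => y i) (amc m); rewrite /ga_map => eq_i.
  by rewrite /g hornerD hornerN hornerC -eq_i divfK ?subrr ?hpow_neq0.
have /eqP := congr1 (horner^~ t) g0.
rewrite /g hornerD hornerN hornerC horner0 subr_eq0 => /eqP Pt.
by rewrite /ga_map Pt mulfK ?hpow_neq0.
Qed.

Definition replica i : {poly {mpoly K[n]}} :=
  ('X_i)%:P + 'X * (drop_poly 1 (P i) \Po ((h ^+ k)%:P * 'X)).

Local Notation b := (ga_map 1 replica 0%N).

Lemma replica_hornerC t i :
  (replica i).[t%:MP] = 'X_i + t%:MP * (drop_poly 1 (P i)).[h ^+ k * t%:MP].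
Proof.
by rewrite hornerD hornerC hornerM hornerX horner_comp hornerM hornerC hornerX.
Qed.

Lemma replicaE t x : U x -> b t x = a (h.@[x] ^+ k * t) x.
Proof.
move=> Ux; apply: functional_extensionality => i.
rewrite ga_map1E ga_mapE meval_coef0 // replica_hornerC.
rewrite mevalD mevalXU mevalM mevalC.
rewrite -horner_map /= mevalM mevalC rmorphXn /=.
by rewrite meval_hornerC; field; rewrite hpow_neq0.
Qed.

Lemma replicaD s t x : U x -> b (s + t) x = b s (b t x).
Proof.
move=> Ux; have Ubx : U (b t x) by rewrite replicaE //; apply: act_stable.
rewrite [LHS]replicaE // [RHS]replicaE // replicaE //.
by rewrite meval_h_ga_map // mulrDr actD.
Qed.

Lemma replica_orbit x :
  U x -> forall y, ga_orbit h P k x y <-> ga_orbit 1 replica 0%N x y.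
Proof.
move=> Ux y; split=> -[t ->]; last by exists (h.@[x] ^+ k * t); rewrite replicaE.
by exists (t / h.@[x] ^+ k); rewrite replicaE // mulrC divfK ?hpow_neq0.
Qed.

Lemma replica_Ga_action :
  zclosed X -> irreducible X -> [pchar K] =i pred0 -> is_Ga_action X 1 replica 0%N.
Proof.
move=> X_closed X_irr pchar0.
case: (act) => _ _ _ /(_ 1 (oner_neq0 _)) [x0 [Ux0 a1x0]].
have U_neq0 : exists x, U x by exists x0.
have U1 x : principal_open X 1 x <-> X x.
  by split=> [[] //|]; split; rewrite ?meval1 ?oner_neq0.
split.
- move=> t x /U1 Xx; apply/U1.
  apply: (ga_map1_stable_dense X_irr U_neq0) => // s z Uz.
  by rewrite replicaE //; case: (act_stable (h.@[z] ^+ k * s) Uz).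
- by move=> x _; apply: functional_extensionality => i;
    rewrite ga_map1E replica_hornerC mul0r addr0 mevalXU.
- move=> s t x /U1; exact: (ga_map1D_dense X_irr U_neq0 replicaD).
- move=> t t_neq0; exists x0; split; first by apply/U1; case: Ux0.
  move=> fix_x0; apply: a1x0.
  apply: (ga_map_period_fixed pchar0 Ux0 (c := h.@[x0] ^+ k * t)).
    by rewrite mulf_neq0 ?hpow_neq0.
  by rewrite -replicaE.
Qed.

End Replica.

Theorem proposition4 (K : closedFieldType) (hK : [pchar K] =i pred0)
  (n : nat) (X : point K n -> Prop) (hXc : zclosed X) (hXi : irreducible X)
  (h : {mpoly K[n]}) (P : 'I_n -> {poly {mpoly K[n]}}) (k : nat)
  (hH : is_Ga_action X h P k) :
  exists (Q : 'I_n -> {poly {mpoly K[n]}}) (k' : nat),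
    is_Ga_action X 1 Q k' /\
    forall x, principal_open X h x ->
      forall y, ga_orbit h P k x y <-> ga_orbit 1 Q k' x y.
Proof.
exists (replica h P k), 0%N; split.
- exact: replica_Ga_action.
- exact: replica_orbit.
Qed.
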